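(* Let $d>1$ and $a_n=1/n^d$ for all $n\in\mathbb{N}$. Let $\lambda=(\lambda_n)$ be complex numbers with $\operatorname{re}\lambda_n\le0$ for all $n$ and $\lim_{n\to\infty}\lambda_n/a_n=0$. Define $\beta_n:=\frac1n\sum_{m=1}^\infty\ln|1-\lambda_m/a_n|$. Then $\lim_{n\to\infty}\beta_n=0$. *)

From HB Require Import structures.
From mathcomp Require Import all_boot all_order all_algebra.
From mathcomp Require Import all_classical all_reals all_analysis.
From mathcomp Require Import complex.
Set Implicit Arguments. Unset Strict Implicit. Unset Printing Implicit Defensive.
Import Order.TTheory GRing.Theory Num.Theory.
Local Open Scope ring_scope.

Definition aseq (R : realType) (d : R) (n : nat) : R := ((n%:R : R) `^ d)^-1.

(* beta_n = (1/n) * sum_{m>=1} ln |1 - lambda_m / a_n|, as an extended real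
   (the series has nonnegative terms when Re lambda_m <= 0, so it always has a
   value in [0, +oo]). *)
Definition beta (R : realType) (d : R) (lam : nat -> R[i]) (n : nat) : \bar R :=
  ((n%:R : R)^-1)%:E *
  (\sum_(1 <= m <oo) (ln (Normc.normc (1 - lam m / real_complex R (aseq d n))))%:E)%E.

From HB Require Import structures.
From mathcomp Require Import all_boot all_order all_algebra.
From mathcomp Require Import all_classical all_reals all_analysis.
From mathcomp Require Import complex.
From mathcomp Require Import lra ring.
Import Order.TTheory GRing.Theory Num.Theory.
Local Open Scope classical_set_scope.
Local Open Scope ring_scope.

(* Write e_m := |lambda_m / a_m| = |lambda_m| m^d, which tends to 0.  Since
   Re lambda_m <= 0, the m-th term of n beta_n lies between 0 and
   ln (1 + e_m (n/m)^d).  For m <= n we use ln (1 + x) <= 2d x^(1/(2d)), which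
   bounds the term by 2d e_m^(1/(2d)) sqrt (n/m); as sum_(m <= n) m^(-1/2) <= 2 sqrt n
   and e_m is eventually small, these terms add up to o(n).  For m > n we use
   ln (1 + x) <= x: the term is at most e_m n^d / m^d, and
   sum_(m > n) m^-d <= n^(1-d) / (d - 1) makes their sum at most
   (sup_(m > n) e_m) n / (d - 1) = o(n). *)

Section RealInequalities.
Variable R : realType.
Implicit Types s t q x y d : R.

Lemma ln1D_le_powR s x : 0 < s <= 1 -> 0 <= x -> ln (1 + x) <= x `^ s / s.
Proof.
move=> /andP[s0 s1] x0.
have xs_le : x `^ s <= x `^ s / s by rewrite ler_peMr ?powR_ge0 // invf_ge1.
have [x1|x1] := lerP x 1.
  apply: le_trans (le_ln1Dx _) (le_trans _ xs_le); first lra.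
  have [->|xn0] := eqVneq x 0; first by rewrite powR0 ?gt_eqF.
  by apply: ger1_powR => //; rewrite lt_def xn0 x0.
(* for x > 1: ln (1 + x) <= ln 2 + ln x <= 1 + (x^s - 1) / s *)
have xp : 0 < x by lra.
have xsp : 0 < x `^ s by exact: powR_gt0.
have ln_sum : ln (1 + x) <= ln 2 + ln x.
  by rewrite -lnM ?posrE // ler_ln ?posrE //; lra.
have ln2_le1 : ln (2 : R) <= 1.
  by have := @le_ln1Dx R 1 ltac:(lra); rewrite (_ : 1 + 1 = 2).
have ln_le : s * ln x <= x `^ s - 1.
  by rewrite -ln_powR; have := @le_ln1Dx R (x `^ s - 1) ltac:(lra); rewrite addrC subrK.
have : ln x <= (x `^ s - 1) / s by rewrite ler_pdivlMr // mulrC.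
have si : 1 <= s^-1 by rewrite invf_ge1.
rewrite mulrBl mul1r; lra.
Qed.

Lemma powR_ge1_subV t q : 1 <= t -> 0 <= q -> 1 + q * (1 - t^-1) <= t `^ q.
Proof.
move=> t1 q0; have t0 : 0 < t by lra.
have ln_ge : 1 - t^-1 <= ln t.
  have tV0 : 0 < t^-1 by rewrite invr_gt0.
  have := @le_ln1Dx R (t^-1 - 1); rewrite (addrC 1) subrK lnV ?posrE //.
  by move=> /(_ ltac:(lra)); lra.
rewrite /powR gt_eqF //; apply: le_trans (expR_ge1Dx _).
by rewrite lerD2l ler_wpM2l.
Qed.

(* Mean-value bound for the convex function x |-> x^-q on [y, y + 1]. *)
Lemma invpowR_subD1_ge q y : 0 < q -> 0 < y ->
  q * ((y + 1) `^ (q + 1))^-1 <= (y `^ q)^-1 - ((y + 1) `^ q)^-1.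
Proof.
move=> q0 y0; have y1 : 0 < y + 1 by lra.
have A0 : 0 < (y + 1) `^ q by exact: powR_gt0.
have B0 : 0 < y `^ q by exact: powR_gt0.
have ratio : ((y + 1) / y) `^ q = (y + 1) `^ q / y `^ q.
  by rewrite powRM ?invr_ge0 ?ltW // -powR_inv1 ?ltW // -powRrM mulN1r powRN.
have Aq1 : (y + 1) `^ (q + 1) = (y + 1) `^ q * (y + 1).
  by rewrite powRD ?powRr1 ?ltW // (gt_eqF y1) implybT.
have := @powR_ge1_subV ((y + 1) / y) q ltac:(rewrite ler_pdivlMr //; lra) (ltW q0).
rewrite ratio invf_div (_ : 1 - y / (y + 1) = (y + 1)^-1); last by field; lra.
have A'0 : 0 <= ((y + 1) `^ q)^-1 by rewrite invr_ge0 ltW.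
move=> /(ler_wpM2l A'0); rewrite mulrA mulVf ?gt_eqF // mul1r Aq1 invfM.
rewrite mulrCA mulrDr mulr1; lra.
Qed.

Lemma sum_invsqrt_le N :
  \sum_(1 <= m < N.+1) (Num.sqrt (m%:R : R))^-1 <= 2 * Num.sqrt (N%:R : R).
Proof.
elim: N => [|N IH]; first by rewrite big_geq.
rewrite big_nat_recr //=.
have step : (Num.sqrt (N.+1%:R : R))^-1 <= 2 * (Num.sqrt N.+1%:R - Num.sqrt N%:R).
  have a0 : 0 < Num.sqrt (N.+1%:R : R) by rewrite sqrtr_gt0 ltr0n.
  have b0 : 0 <= Num.sqrt (N%:R : R) := sqrtr_ge0 _.
  have ab : Num.sqrt (N%:R : R) ^+ 2 + 1 = Num.sqrt (N.+1%:R) ^+ 2.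
    by rewrite !sqr_sqrtr // natr1.
  rewrite -(ler_pM2r a0) mulVf ?gt_eqF //.
  move: ab; set a := Num.sqrt (N.+1%:R : R); set b := Num.sqrt (N%:R : R).
  rewrite !expr2; nra.
lra.
Qed.

Lemma sum_invpowR_tail_le d n N : 1 < d -> (0 < n)%N ->
  \sum_(n.+1 <= m < N) ((m%:R : R) `^ d)^-1 <= ((n%:R : R) `^ (d - 1))^-1 / (d - 1).
Proof.
move=> d1 n0; set q := d - 1; have q0 : 0 < q by rewrite /q; lra.
have [Nn|nN] := leqP N n.+1.
  by rewrite big_geq // divr_ge0 ?invr_ge0 ?powR_ge0 // ltW.
(* u is a primitive of x^-d, so the sum telescopes like the integral over [n, oo). *)
pose u (k : nat) : R := - ((k%:R : R) `^ q)^-1 / q.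
have step k : (0 < k)%N -> ((k.+1%:R : R) `^ d)^-1 <= u k.+1 - u k.
  move=> k0; have := @invpowR_subD1_ge q k%:R q0 ltac:(by rewrite ltr0n).
  rewrite {2}/q subrK natr1 => h.
  by rewrite /u !mulNr opprK addrC -mulrBl ler_pdivlMr // mulrC.
rewrite big_add1 /=.
apply: le_trans (ler_sum_nat (G := fun k => u k.+1 - u k) _) _.
  by move=> k /andP[nk _]; apply: step; apply: leq_trans nk.
rewrite telescope_sumr; last by rewrite -ltnS (ltn_predK nN) ltnW.
have uN : u N.-1 <= 0 by rewrite /u mulNr oppr_le0 divr_ge0 ?invr_ge0 ?powR_ge0 ?ltW.
rewrite /u in uN *; lra.
Qed.

Lemma ler_sum_mul_split (f w : nat -> R) a M b (E eta : R) :
  (a <= M <= b)%N -> 0 <= eta -> (forall m, 0 <= w m) ->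
  (forall m, f m <= E) -> (forall m, (M <= m)%N -> f m <= eta) ->
  \sum_(a <= m < b) f m * w m <= E * \sum_(a <= m < M) w m + eta * \sum_(a <= m < b) w m.
Proof.
move=> /andP[aM Mb] eta0 w0 fE feta.
rewrite !(big_cat_nat aM Mb) /= mulrDr !mulr_sumr addrA; apply: lerD.
  rewrite -[leLHS]addr0; apply: lerD; last by rewrite sumr_ge0 // => m _; rewrite mulr_ge0.
  by apply: ler_sum => m _; rewrite ler_wpM2r.
by apply: ler_sum_nat => m /andP[Mm _]; rewrite ler_wpM2r ?feta.
Qed.

End RealInequalities.

Lemma nneseq_cvge0 (R : realType) (u : nat -> \bar R) :
  (forall n, (0 <= u n)%E) ->
  (forall eps : R, 0 < eps -> \forall n \near \oo, (u n <= eps%:E)%E) ->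
  u @ \oo --> 0%E.
Proof.
move=> u0 u_small; apply/fine_cvgP; split.
  apply: filterS (u_small 1 ltr01) => n un1.
  by rewrite ge0_fin_numE ?u0 // (le_lt_trans un1) ?ltry.
apply/cvgrPdist_le => eps eps0; apply: filterS (u_small _ eps0) => n une.
have unfin : u n \is a fin_num by rewrite ge0_fin_numE ?u0 // (le_lt_trans une) ?ltry.
by rewrite sub0r normrN /= ger0_norm ?fine_ge0 ?u0 // -lee_fin fineK.
Qed.

(* [beta] for lambda_m = - r_m: the largest value of [beta] given |lambda_m| = r_m. *)
Definition beta_majorant {R : realType} (d : R) (r : nat -> R) (n : nat) : \bar R :=
  ((n%:R : R)^-1)%:E * (\sum_(1 <= m <oo) (ln (1 + r m * n%:R `^ d))%:E)%E.

Section BetaMajorant.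
Variables (R : realType) (d : R) (r : nat -> R).
Hypotheses (d_gt1 : 1 < d) (r_ge0 : forall m, 0 <= r m).

Let e m : R := r m * (m%:R : R) `^ d.
Let s := (2 * d)^-1.

Let e_ge0 m : 0 <= e m. Proof. by rewrite mulr_ge0 ?powR_ge0. Qed.
Let d_gt0 : 0 < d. Proof. exact: lt_trans ltr01 d_gt1. Qed.
Let s_gt0 : 0 < s. Proof. by rewrite invr_gt0 mulr_gt0. Qed.
Let dB1_gt0 : 0 < d - 1. Proof. by rewrite subr_gt0. Qed.
Let s_le1 : s <= 1. Proof. by rewrite invf_le1 ?mulr_gt0 //; have := d_gt1; lra. Qed.

Lemma ln1D_le_sqrt n m : (0 < m)%N ->
  ln (1 + r m * n%:R `^ d) <= 2 * d * Num.sqrt n%:R * (e m `^ s / Num.sqrt m%:R).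
Proof.
move=> m0; have s01 : 0 < s <= 1 by rewrite s_gt0 s_le1.
apply: le_trans (@ln1D_le_powR R s _ s01 (mulr_ge0 (r_ge0 m) (powR_ge0 _ _))) _.
have powRs k : ((k%:R : R) `^ d) `^ s = Num.sqrt k%:R.
  by rewrite -powRrM (_ : d * s = 2^-1) ?powR12_sqrt //; rewrite /s; field; rewrite gt_eqF.
have sqrtm0 : Num.sqrt (m%:R : R) != 0 by rewrite gt_eqF // sqrtr_gt0 ltr0n.
rewrite /e !powRM ?r_ge0 ?powR_ge0 // !powRs /s invrK mulfK //; lra.
Qed.

Lemma head_sum_le n M (E eta : R) : (M <= n)%N -> 0 <= eta ->
    (forall m, e m <= E) -> (forall m, (M < m)%N -> e m <= eta) ->
  \sum_(1 <= m < n.+1) ln (1 + r m * n%:R `^ d) <=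
    4 * d * E `^ s * Num.sqrt M%:R * Num.sqrt n%:R + 4 * d * eta `^ s * n%:R.
Proof.
move=> Mn eta0 eE e_eta; have s0 := ltW s_gt0.
apply: le_trans (ler_sum_nat (G := fun m => 2 * d * Num.sqrt n%:R *
  (e m `^ s * (Num.sqrt m%:R)^-1)) _) _.
  by move=> m /andP[m0 _]; exact: ln1D_le_sqrt.
rewrite -mulr_sumr.
have split_bound := @ler_sum_mul_split R (fun m => e m `^ s) (fun m => (Num.sqrt m%:R)^-1)
  1 M.+1 n.+1 (E `^ s) (eta `^ s) ltac:(by rewrite !ltnS Mn) (powR_ge0 _ _)
  (fun m => ltac:(by rewrite invr_ge0 sqrtr_ge0))
  (fun m => ge0_ler_powR s0 (e_ge0 m) (le_trans (e_ge0 m) (eE m)) (eE m))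
  (fun m Mm => ge0_ler_powR s0 (e_ge0 m) eta0 (e_eta m Mm)).
have hM := sum_invsqrt_le R M; have hn := sum_invsqrt_le R n.
have sqrtn : Num.sqrt (n%:R : R) * Num.sqrt n%:R = n%:R by rewrite -expr2 sqr_sqrtr.
have c0 : 0 <= 2 * d * Num.sqrt (n%:R : R) by rewrite !mulr_ge0 ?sqrtr_ge0 ?ltW.
apply: le_trans (ler_wpM2l c0 split_bound) _.
set SM := \sum_(1 <= m < M.+1) _ in hM *; set Sn := \sum_(1 <= m < n.+1) _ in hn *.
have EsSM : E `^ s * SM <= E `^ s * (2 * Num.sqrt M%:R) by rewrite ler_wpM2l ?powR_ge0.
have etaSn : eta `^ s * Sn <= eta `^ s * (2 * Num.sqrt n%:R) by rewrite ler_wpM2l ?powR_ge0.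
apply: le_trans (ler_wpM2l c0 (lerD EsSM etaSn)) _.
move: sqrtn; set t := Num.sqrt (n%:R : R) => <-; lra.
Qed.

Lemma tail_sum_le n N (eta : R) : (0 < n)%N -> (forall m, (n < m)%N -> e m <= eta) ->
  \sum_(n.+1 <= m < N) ln (1 + r m * n%:R `^ d) <= eta * n%:R / (d - 1).
Proof.
move=> n0 e_eta; have eta0 : 0 <= eta := le_trans (e_ge0 _) (e_eta _ (ltnSn n)).
have nd0 : 0 <= eta * (n%:R : R) `^ d by rewrite mulr_ge0 ?powR_ge0.
apply: le_trans (ler_sum_nat (G := fun m => eta * n%:R `^ d * ((m%:R : R) `^ d)^-1) _) _.
  move=> m /andP[nm _]; have m0 : 0 < (m%:R : R) `^ d.
    by rewrite powR_gt0 // ltr0n (leq_trans _ nm).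
  apply: le_trans (le_ln1Dx _) _.
    by have := mulr_ge0 (r_ge0 m) (powR_ge0 (n%:R : R) d); lra.
  rewrite (_ : r m * _ = e m * n%:R `^ d * ((m%:R : R) `^ d)^-1); last first.
    by rewrite /e; field; rewrite gt_eqF.
  by rewrite ler_pM2r ?invr_gt0 // ler_pM2r ?powR_gt0 ?ltr0n // e_eta.
have tail_le := @sum_invpowR_tail_le R d n N d_gt1 n0.
rewrite -big_distrr /=; apply: le_trans (ler_wpM2l nd0 tail_le) _.
have nq0 : 0 < (n%:R : R) `^ (d - 1) by rewrite powR_gt0 // ltr0n.
rewrite -(mulr_powRB1 (ler0n _ n)) // -!mulrA mulVKf ?gt_eqF //.
Qed.

Lemma partial_sum_le n M N (E eta : R) : (0 < n)%N -> (M <= n < N)%N -> 0 <= eta ->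
    (forall m, e m <= E) -> (forall m, (M < m)%N -> e m <= eta) ->
  \sum_(1 <= m < N) ln (1 + r m * n%:R `^ d) <=
    4 * d * E `^ s * Num.sqrt M%:R * Num.sqrt n%:R
      + n%:R * (4 * d * eta `^ s + eta / (d - 1)).
Proof.
move=> n0 /andP[Mn nN] eta0 eE e_eta.
rewrite (big_cat_nat (n := n.+1)) //=.
have tail := @tail_sum_le n N eta n0 (fun m nm => e_eta m (leq_ltn_trans Mn nm)).
have head := @head_sum_le n M E eta Mn eta0 eE e_eta.
apply: le_trans (lerD head tail) _; lra.
Qed.

Lemma beta_majorant_ge0 n : (0 <= beta_majorant d r n)%E.
Proof.
apply: mule_ge0; first by rewrite lee_fin invr_ge0.
apply: nneseries_ge0 => m _ _; rewrite lee_fin ln_ge0 // lerDl.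
by rewrite mulr_ge0 ?powR_ge0.
Qed.

Lemma beta_majorant_le n M (E eta : R) : (0 < n)%N -> (M <= n)%N -> 0 <= eta ->
    (forall m, e m <= E) -> (forall m, (M < m)%N -> e m <= eta) ->
  (beta_majorant d r n <= (4 * d * E `^ s * Num.sqrt M%:R / Num.sqrt n%:R
     + (4 * d * eta `^ s + eta / (d - 1)))%:E)%E.
Proof.
move=> n0 Mn eta0 eE e_eta.
have series_le : (\sum_(1 <= m <oo) (ln (1 + r m * n%:R `^ d))%:E <=
    (4 * d * E `^ s * Num.sqrt M%:R * Num.sqrt n%:R
      + n%:R * (4 * d * eta `^ s + eta / (d - 1)))%:E)%E.
  apply: lime_le.
    apply: is_cvg_nneseries => m _ _; rewrite lee_fin ln_ge0 // lerDl.
    by rewrite mulr_ge0 ?powR_ge0.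
  apply: filterS (nbhs_infty_gt n) => N nN; rewrite sumEFin lee_fin.
  by apply: partial_sum_le; rewrite ?Mn.
have nV0 : (0 <= ((n%:R : R)^-1)%:E)%E by rewrite lee_fin invr_ge0.
apply: le_trans (lee_wpmul2l nV0 series_le) _; rewrite -EFinM lee_fin.
have sqrtn0 : 0 < Num.sqrt (n%:R : R) by rewrite sqrtr_gt0 ltr0n.
have sqrtn : Num.sqrt (n%:R : R) * Num.sqrt n%:R = n%:R by rewrite -expr2 sqr_sqrtr.
move: sqrtn0 sqrtn; set t := Num.sqrt _; set K := 4 * d * _ * _.
set h := 4 * d * eta `^ s + eta / (d - 1).
move=> t0 <-; rewrite [leLHS](_ : _ = K / t + h) //; field; exact: lt0r_neq0.
Qed.

Lemma beta_majorant_cvg0 : e @ \oo --> 0 -> beta_majorant d r n @[n --> \oo] --> 0%E.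
Proof.
move=> e_cvg0.
have [E eE] : exists E, forall m, e m <= E.
  have /ex_bound [|E hE] := cvg_seq_bounded (cvgP 0%R e_cvg0).
    exact: (@globally_properfilter _ _ 0%N).
  by exists E => m; apply: le_trans (ler_norm _) (hE m I).
apply: nneseq_cvge0 => [n|eps eps0]; first exact: beta_majorant_ge0.
have [eta eta0 eta_small] :
    exists2 eta : R, 0 < eta & 4 * d * eta `^ s + eta / (d - 1) <= eps / 2.
  set c := eps / (16 * d); have c0 : 0 < c by rewrite divr_gt0 ?mulr_gt0.
  set eta : R := Num.min (c `^ (2 * d)) ((d - 1) * eps / 4).
  have eta0 : 0 < eta by rewrite lt_min powR_gt0 //= !mulr_gt0.
  have eta_c : eta <= c `^ (2 * d) by rewrite ge_min lexx.
  have eta_eps : eta <= (d - 1) * eps / 4 by rewrite ge_min lexx orbT.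
  exists eta => //.
  have eta_s : eta `^ s <= c.
    apply: le_trans (ge0_ler_powR (ltW s_gt0) (ltW eta0) (powR_ge0 c (2 * d)) eta_c) _.
    by rewrite -powRrM /s mulfV ?powRr1 ?(ltW c0) // gt_eqF ?mulr_gt0.
  have : 4 * d * eta `^ s <= eps / 4.
    apply: le_trans (_ : _ <= 4 * d * c) _; first by rewrite ler_pM2l ?mulr_gt0.
    by rewrite (_ : 4 * d * c = eps / 4) //; rewrite /c; field; rewrite gt_eqF.
  have : eta / (d - 1) <= eps / 4 by rewrite ler_pdivrMr //; lra.
  lra.
have [M _ hM] := proj1 (cvgrPdist_le _ _) e_cvg0 eta eta0.
have e_eta m : (M < m)%N -> e m <= eta.
  by move=> Mm; have := hM m (ltnW Mm); rewrite /= sub0r normrN ger0_norm.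
set K := 4 * d * E `^ s * Num.sqrt M%:R.
have K0 : 0 <= K by rewrite !mulr_ge0 ?powR_ge0 ?sqrtr_ge0 ?ltW.
near=> n.
have n0 : (0 < n)%N by near: n; exact: nbhs_infty_gt.
have Mn : (M <= n)%N by near: n; exact: nbhs_infty_ge.
have nK : (2 * K / eps) ^+ 2 <= n%:R by near: n; exact: nbhs_infty_ger.
apply: le_trans (@beta_majorant_le n M E eta n0 Mn (ltW eta0) eE e_eta) _.
rewrite lee_fin -/K.
have t0 : 0 < Num.sqrt (n%:R : R) by rewrite sqrtr_gt0 ltr0n.
have Kt : 2 * K / eps <= Num.sqrt n%:R.
  by move: nK; rewrite -ler_sqrt ?ler0n // sqrtr_sqr; apply: le_trans (ler_norm _).
move: Kt; rewrite ler_pdivrMr // => Kt.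
have : K / Num.sqrt n%:R <= eps / 2 by rewrite ler_pdivrMr //; lra.
lra.
Unshelve. all: by end_near.
Qed.

End BetaMajorant.

Section ComplexFacts.
Context {R : realType}.
Implicit Types (z w : R[i]) (x d : R).

Lemma normc_ge0 z : 0 <= Normc.normc z.
Proof. by case: z => a b; exact: sqrtr_ge0. Qed.

Lemma normc_1B_le w : Normc.normc (1 - w) <= 1 + Normc.normc w.
Proof. by rewrite -(Normc.normc1 R) -(normcN w); apply: le_normcD. Qed.

Lemma normc_1B_ge1 w : complex.Re w <= 0 -> 1 <= Normc.normc (1 - w).
Proof.
case: w => a b /= a0.
rewrite -[leLHS]sqrtr1 ler_sqrt ?addr_ge0 ?sqr_ge0 // sub0r sqrrN.
have : 1 <= (1 - a) ^+ 2 by rewrite expr2; nra.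
by have := sqr_ge0 b; lra.
Qed.

Lemma ln_normc_1B_ge0 w : complex.Re w <= 0 -> 0 <= ln (Normc.normc (1 - w)).
Proof. by move/normc_1B_ge1; exact: ln_ge0. Qed.

Lemma ln_normc_1B_le w : complex.Re w <= 0 ->
  ln (Normc.normc (1 - w)) <= ln (1 + Normc.normc w).
Proof.
move=> /normc_1B_ge1 w1; rewrite ler_ln ?posrE ?normc_1B_le //; first lra.
by have := normc_ge0 w; lra.
Qed.

Lemma divc_aseq z d n : z / real_complex R (aseq d n) = z * real_complex R (n%:R `^ d).
Proof. by rewrite /aseq -fmorphV invrK. Qed.

Lemma normc_div_aseq z d n :
  Normc.normc (z / real_complex R (aseq d n)) = Normc.normc z * n%:R `^ d.
Proof.
rewrite divc_aseq Normc.normcM /Normc.normc /= expr0n /= addr0 sqrtr_sqr.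
by rewrite ger0_norm ?powR_ge0.
Qed.

Lemma Re_div_aseq z d n :
  complex.Re (z / real_complex R (aseq d n)) = complex.Re z * n%:R `^ d.
Proof. by rewrite divc_aseq; case: z => a b /=; rewrite mulr0 subr0. Qed.

End ComplexFacts.

Lemma beta_le_majorant (R : realType) (d : R) (lam : nat -> R[i]) n :
    (forall m, complex.Re (lam m) <= 0) ->
  (0 <= beta d lam n <= beta_majorant d (fun m => Normc.normc (lam m)) n)%E.
Proof.
move=> hre; have Re_le0 m : complex.Re (lam m / real_complex R (aseq d n)) <= 0.
  by rewrite Re_div_aseq mulr_le0_ge0 ?powR_ge0.
have nV0 : (0 <= ((n%:R : R)^-1)%:E)%E by rewrite lee_fin invr_ge0.
apply/andP; split.
  apply: mule_ge0 => //; apply: nneseries_ge0 => m _ _.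
  by rewrite lee_fin ln_normc_1B_ge0.
apply: lee_wpmul2l => //; apply: lee_nneseries => [m _ _|m _].
  by rewrite lee_fin ln_normc_1B_ge0.
by rewrite lee_fin -normc_div_aseq ln_normc_1B_le.
Qed.

Theorem proposition3 (R : realType) (d : R) (lam : nat -> R[i])
  (hd : 1 < d)
  (hre : forall n, complex.Re (lam n) <= 0)
  (hlim : (fun n => Normc.normc (lam n / real_complex R (aseq d n))) @ \oo --> 0%R) :
  beta d lam n @[n --> \oo] --> 0%E.
Proof.
have e_cvg0 : (fun m => Normc.normc (lam m) * (m%:R : R) `^ d) @ \oo --> 0%R.
  by move: hlim; under eq_fun do rewrite normc_div_aseq.
have majorant_cvg0 := @beta_majorant_cvg0 R d _ hd (fun m => normc_ge0 (lam m)) e_cvg0.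
apply: (squeeze_cvge _ (cvg_cst _) majorant_cvg0).
by apply: nearW => n; exact: beta_le_majorant.
Qed.
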